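(* Let $A$ be a real $m\times m$ matrix, $f$ in the range of $A$, $y$ the minimal-norm solution of $Ay=f$. Fix $q\in(0,1)$, $\alpha_0>0$, $C>1$, $\varepsilon\in(0,1)$. For each $\delta\in(0,1)$ let $f_\delta\in\mathbb{R}^m$ satisfy $\|f_\delta-f\|\le\delta$ and $(1-q)\alpha_0q\|Q_{\alpha_0q}^{-1}f_\delta\|>C\delta^\varepsilon$, and let $n_\delta$ be the smallest integer $n\ge1$ with $G_n\le C\delta^\varepsilon$. Then $$\lim_{\delta\to0}\frac{\delta}{\sqrt{\alpha_0q^{n_\delta}}}=0.$$
   Context: $A^*$ is the transpose of $A$, $Q:=AA^*$, $Q_a:=Q+aI$ for $a>0$; $\|\cdot\|$ is the Euclidean norm. $G_0=0$ and $G_n=qG_{n-1}+(1-q)\alpha_0q^n\|Q_{\alpha_0q^n}^{-1}f_\delta\|$ for $n\ge1$. *)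

(* real numbers (limits needed). Matrices/vectors are encoded
   as functions on nat; only indices < m are relevant. *)
From Stdlib Require Import Reals Lra ClassicalEpsilon.
Open Scope R_scope.

Definition vec := nat -> R.
Definition mat := nat -> nat -> R.

Fixpoint rsum (n : nat) (F : nat -> R) : R :=
  match n with
  | O => 0
  | S k => rsum k F + F k
  end.

Definition mv (m : nat) (A : mat) (x : vec) : vec :=
  fun i => rsum m (fun j => A i j * x j).

Definition tr (A : mat) : mat := fun i j => A j i.

Definition Qm (m : nat) (A : mat) : mat :=
  fun i j => rsum m (fun k => A i k * tr A k j).

Definition Qa (m : nat) (A : mat) (a : R) (x : vec) : vec :=
  fun i => mv m (Qm m A) x i + a * x i.

Definition vnorm (m : nat) (x : vec) : R := sqrt (rsum m (fun i => x i ^ 2)).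

(* Q_a^{-1} g : the (unique, for a > 0) vector x of R^m (zero outside
   indices < m) with Q_a x = g on R^m *)
Definition Qainv (m : nat) (A : mat) (a : R) (g : vec) : vec :=
  epsilon (inhabits (fun _ => 0))
    (fun x => (forall i, (i < m)%nat -> Qa m A a x i = g i) /\
              (forall i, (m <= i)%nat -> x i = 0)).

Fixpoint Gseq (m : nat) (A : mat) (q a0 : R) (fd : vec) (n : nat) : R :=
  match n with
  | O => 0
  | S k => q * Gseq m A q a0 fd k
           + (1 - q) * a0 * q ^ (S k)
             * vnorm m (Qainv m A (a0 * q ^ (S k)) fd)
  end.

From Stdlib Require Import Reals Lra Lia Arith Classical ClassicalEpsilon.
Open Scope R_scope.

(* Pairing Q_a u = A y + e with u gives |A^* u|^2 + a|u|^2 = <A^* u, y> + <u, e>,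
   and two weighted AM-GM steps yield a |Q_a^{-1} f_delta| <= delta + |y| sqrt a.
   Feeding this into the recursion for G_n gives G_n <= delta + 2|y| sqrt(alpha_0 q^n).
   Since n_delta >= 2 and G_(n_delta - 1) > C delta^eps >= delta + (C - 1) delta^eps,
   we get delta^eps <= c sqrt(alpha_0 q^(n_delta - 1)), hence
   delta / sqrt(alpha_0 q^n_delta) <= c' delta^(1 - eps) -> 0. *)

Lemma rsum_ext n F G : (forall i, (i < n)%nat -> F i = G i) -> rsum n F = rsum n G.
Proof.
induction n as [|n IH]; intros H; simpl; [reflexivity|].
rewrite IH, H; [reflexivity|lia|intros; apply H; lia].
Qed.

Lemma rsum_plus n F G : rsum n (fun i => F i + G i) = rsum n F + rsum n G.
Proof. induction n as [|n IH]; simpl; [|rewrite IH]; ring. Qed.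

Lemma rsum_scal n c F : rsum n (fun i => c * F i) = c * rsum n F.
Proof. induction n as [|n IH]; simpl; [|rewrite IH]; ring. Qed.

Lemma rsum_0 n : rsum n (fun _ => 0) = 0.
Proof. induction n as [|n IH]; simpl; [|rewrite IH]; ring. Qed.

Lemma rsum_le n F G : (forall i, (i < n)%nat -> F i <= G i) -> rsum n F <= rsum n G.
Proof.
induction n as [|n IH]; intros H; simpl; [lra|].
apply Rplus_le_compat; [apply IH; intros; apply H|apply H]; lia.
Qed.

Lemma rsum_nonneg n F : (forall i, (i < n)%nat -> 0 <= F i) -> 0 <= rsum n F.
Proof. intros H. rewrite <- (rsum_0 n). apply rsum_le; exact H. Qed.

Lemma rsum_term_le n F i :
  (forall j, (j < n)%nat -> 0 <= F j) -> (i < n)%nat -> F i <= rsum n F.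
Proof.
induction n as [|n IH]; intros H Hi; simpl; [lia|].
destruct (Nat.eq_dec i n) as [->|Hin].
- assert (0 <= rsum n F) by (apply rsum_nonneg; intros; apply H; lia). lra.
- assert (F i <= rsum n F) by (apply IH; [intros; apply H|]; lia).
  assert (0 <= F n) by (apply H; lia). lra.
Qed.

Lemma rsum_comm n p F :
  rsum n (fun i => rsum p (fun j => F i j)) = rsum p (fun j => rsum n (fun i => F i j)).
Proof.
induction n as [|n IH]; simpl; [now rewrite rsum_0|].
now rewrite IH, <- rsum_plus.
Qed.

Lemma rsum_delta n a (x : vec) i : (i < n)%nat ->
  rsum n (fun j => (if Nat.eq_dec i j then a else 0) * x j) = a * x i.
Proof.
induction n as [|n IH]; intros Hi; simpl; [lia|].
destruct (Nat.eq_dec i n) as [->|Hin].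
- rewrite (rsum_ext n _ (fun _ => 0)), rsum_0; [ring|].
  intros j Hj. destruct (Nat.eq_dec n j); [lia|ring].
- rewrite IH by lia. ring.
Qed.

Definition dot (m : nat) (x y : vec) : R := rsum m (fun i => x i * y i).

Lemma dot_ext m x x' y y' :
  (forall i, (i < m)%nat -> x i = x' i) -> (forall i, (i < m)%nat -> y i = y' i) ->
  dot m x y = dot m x' y'.
Proof. intros Hx Hy. apply rsum_ext; intros i Hi. now rewrite Hx, Hy. Qed.

Lemma dot_self_nonneg m x : 0 <= dot m x x.
Proof. apply rsum_nonneg; intros; nra. Qed.

Lemma dot_self_eq0 m x i : dot m x x = 0 -> (i < m)%nat -> x i = 0.
Proof.
intros H Hi.
assert (x i * x i <= dot m x x) by (apply (rsum_term_le m (fun j => x j * x j)); auto; intros; nra).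
nra.
Qed.

Lemma vnorm_dot m x : vnorm m x = sqrt (dot m x x).
Proof. unfold vnorm, dot. f_equal. apply rsum_ext; intros; ring. Qed.

Lemma dot_mv_tr m M u v : dot m u (mv m M v) = dot m (mv m (tr M) u) v.
Proof.
unfold dot, mv, tr.
transitivity (rsum m (fun i => rsum m (fun j => u i * M i j * v j))).
- apply rsum_ext; intros. rewrite <- rsum_scal. apply rsum_ext; intros; ring.
- rewrite rsum_comm. apply rsum_ext; intros. rewrite Rmult_comm, <- rsum_scal.
  apply rsum_ext; intros; ring.
Qed.

Lemma mv_Qm m A u i : mv m (Qm m A) u i = mv m A (mv m (tr A) u) i.
Proof.
unfold mv, Qm.
transitivity (rsum m (fun j => rsum m (fun k => A i k * tr A k j * u j))).
- apply rsum_ext; intros. rewrite Rmult_comm, <- rsum_scal. apply rsum_ext; intros; ring.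
- rewrite rsum_comm. apply rsum_ext; intros. rewrite <- rsum_scal.
  apply rsum_ext; intros; ring.
Qed.

Lemma dot_Qa m A a u :
  dot m u (Qa m A a u) = dot m (mv m (tr A) u) (mv m (tr A) u) + a * dot m u u.
Proof.
transitivity (dot m u (mv m A (mv m (tr A) u)) + a * dot m u u).
- unfold dot, Qa. rewrite <- rsum_scal, <- rsum_plus.
  apply rsum_ext; intros. rewrite mv_Qm. ring.
- now rewrite dot_mv_tr.
Qed.

Lemma dot_le_weighted m x y t :
  0 < t -> 2 * dot m x y <= t * dot m x x + / t * dot m y y.
Proof.
intros Ht. unfold dot. rewrite <- !rsum_scal, <- rsum_plus.
apply rsum_le; intros i _.
assert (0 <= t * (x i - y i / t) ^ 2) by (apply Rmult_le_pos; [lra|apply pow2_ge_0]).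
replace (t * (x i - y i / t) ^ 2)
  with (t * (x i * x i) + / t * (y i * y i) - 2 * (x i * y i)) in H by (field; lra).
lra.
Qed.

(* Gaussian elimination: a row with a nonzero entry in the last column eliminates
   the last unknown from the other m rows, re-indexed by [row] below. *)
Lemma homogeneous_nontrivial m : forall n (M : mat), (m < n)%nat ->
  exists x : vec, (exists j, (j < n)%nat /\ x j <> 0) /\
    forall i, (i < m)%nat -> rsum n (fun j => M i j * x j) = 0.
Proof.
induction m as [|m IH]; intros n M Hmn.
{ exists (fun _ => 1). split; [exists 0%nat; split; [lia|lra]|intros; lia]. }
destruct n as [|n]; [lia|].
destruct (classic (exists i0, (i0 <= m)%nat /\ M i0 n <> 0)) as [[i0 [Hi0 Hp]]|Hzero].
- set (p := M i0 n).
  set (row := fun k => if Nat.eq_dec k i0 then m else k).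
  destruct (IH n (fun k j => M (row k) j - M (row k) n / p * M i0 j)) as [x [Hx Hrows]];
    [lia|].
  set (s := rsum n (fun j => M i0 j * x j)).
  exists (fun j => if Nat.eq_dec j n then - s / p else x j). split.
  { destruct Hx as [j [Hj Hxj]]. exists j. split; [lia|].
    destruct (Nat.eq_dec j n); [lia|exact Hxj]. }
  intros i Hi. simpl. destruct (Nat.eq_dec n n) as [_|]; [|lia].
  rewrite (rsum_ext n _ (fun j => M i j * x j)).
  2:{ intros j Hj. destruct (Nat.eq_dec j n); [lia|reflexivity]. }
  destruct (Nat.eq_dec i i0) as [->|Hii0]; [fold s p; field; exact Hp|].
  assert (Hrow : exists k, (k < m)%nat /\ row k = i).
  { unfold row. destruct (Nat.eq_dec i m) as [->|Him].
    - exists i0. destruct (Nat.eq_dec i0 i0); [split; lia|lia].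
    - exists i. destruct (Nat.eq_dec i i0); [lia|split; lia]. }
  destruct Hrow as [k [Hk <-]].
  specialize (Hrows k Hk). simpl in Hrows.
  rewrite (rsum_ext n _ (fun j => M (row k) j * x j + - (M (row k) n / p) * (M i0 j * x j)))
    in Hrows by (intros; ring).
  rewrite rsum_plus, rsum_scal in Hrows. fold s in Hrows.
  rewrite <- Hrows. field. exact Hp.
- exists (fun j => if Nat.eq_dec j n then 1 else 0). split.
  { exists n. split; [lia|]. destruct (Nat.eq_dec n n); [lra|lia]. }
  intros i Hi. simpl. destruct (Nat.eq_dec n n) as [_|]; [|lia].
  rewrite (rsum_ext n _ (fun _ => 0)), rsum_0.
  2:{ intros j Hj. destruct (Nat.eq_dec j n); [lia|ring]. }
  assert (M i n = 0) as -> by (apply NNPP; intro H; apply Hzero; exists i; split; [lia|exact H]).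
  ring.
Qed.

Lemma mv_surj_of_inj m (M : mat) :
  (forall x, (forall i, (i < m)%nat -> mv m M x i = 0) -> forall i, (i < m)%nat -> x i = 0) ->
  forall g : vec, exists z : vec,
    (forall i, (i < m)%nat -> mv m M z i = g i) /\ (forall i, (m <= i)%nat -> z i = 0).
Proof.
intros Hinj g.
(* a nonzero kernel vector of [M | -g]; injectivity of M forces its last entry to be nonzero *)
destruct (homogeneous_nontrivial m (S m) (fun i j => if Nat.eq_dec j m then - g i else M i j))
  as [x [[j [Hj Hxj]] Hx]]; [lia|].
assert (Hsol : forall i, (i < m)%nat -> mv m M x i = g i * x m).
{ intros i Hi. specialize (Hx i Hi). simpl in Hx. destruct (Nat.eq_dec m m) as [_|]; [|lia].
  rewrite (rsum_ext m _ (fun j => M i j * x j)) in Hx.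
  2:{ intros j0 Hj0. destruct (Nat.eq_dec j0 m); [lia|reflexivity]. }
  unfold mv. lra. }
assert (Hxm : x m <> 0).
{ intro H0. apply Hxj. destruct (Nat.eq_dec j m) as [->|Hjm]; [exact H0|].
  apply Hinj; [|lia]. intros i Hi. rewrite Hsol, H0 by exact Hi. ring. }
exists (fun j => if lt_dec j m then x j / x m else 0). split.
- intros i Hi. unfold mv.
  rewrite (rsum_ext m _ (fun j => / x m * (M i j * x j))).
  2:{ intros j0 Hj0. destruct (lt_dec j0 m); [|lia]. field. exact Hxm. }
  rewrite rsum_scal. fold (mv m M x i). rewrite Hsol by exact Hi. field. exact Hxm.
- intros i Hi. destruct (lt_dec i m); [lia|reflexivity].
Qed.

Lemma Qa_kernel_trivial m A a x : 0 < a ->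
  (forall i, (i < m)%nat -> Qa m A a x i = 0) -> forall i, (i < m)%nat -> x i = 0.
Proof.
intros Ha Hx i Hi. apply (dot_self_eq0 m x i); [|exact Hi].
assert (H := dot_Qa m A a x).
rewrite (dot_ext m x x (Qa m A a x) (fun _ => 0)) in H by auto.
unfold dot at 1 in H. rewrite (rsum_ext m _ (fun _ => 0)), rsum_0 in H by (intros; ring).
assert (H1 := dot_self_nonneg m (mv m (tr A) x)). assert (H2 := dot_self_nonneg m x).
nra.
Qed.

Lemma Qainv_spec m A a g : 0 < a ->
  forall i, (i < m)%nat -> Qa m A a (Qainv m A a g) i = g i.
Proof.
intros Ha. unfold Qainv.
match goal with |- context [epsilon ?inh ?P] => enough (Hs : P (epsilon inh P)) by apply Hs end.
apply epsilon_spec.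
set (M := fun i j => Qm m A i j + (if Nat.eq_dec i j then a else 0)).
assert (HM : forall x i, (i < m)%nat -> mv m M x i = Qa m A a x i).
{ intros x i Hi. unfold mv, M, Qa.
  rewrite (rsum_ext m _ (fun j => Qm m A i j * x j + (if Nat.eq_dec i j then a else 0) * x j))
    by (intros; ring).
  now rewrite rsum_plus, rsum_delta. }
destruct (mv_surj_of_inj m M) with g as [z [Hz Hpad]].
- intros x Hx. apply (Qa_kernel_trivial m A a x Ha). intros i Hi. rewrite <- HM; auto.
- exists z. split; [|exact Hpad]. intros i Hi. rewrite <- HM; auto.
Qed.

Lemma mul_sqrt_le a X W : 0 <= a -> 0 <= X -> 0 <= W ->
  a * a * X <= W * W -> a * sqrt X <= W.
Proof.
intros Ha HX HW Hsq. apply Rsqr_incr_0_var; [unfold Rsqr|exact HW].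
replace (a * sqrt X * (a * sqrt X)) with (a * a * (sqrt X * sqrt X)) by ring.
now rewrite sqrt_sqrt.
Qed.

Lemma Qa_solution_bound m A a u y e : 0 < a ->
  (forall i, (i < m)%nat -> Qa m A a u i = mv m A y i + e i) ->
  a * vnorm m u <= vnorm m e + vnorm m y * sqrt a.
Proof.
intros Ha Hu. set (z := mv m (tr A) u).
assert (Henergy : dot m z z + a * dot m u u = dot m z y + dot m u e).
{ unfold z. rewrite <- dot_Qa, <- dot_mv_tr. unfold dot. rewrite <- rsum_plus.
  apply rsum_ext; intros i Hi. rewrite Hu by exact Hi. ring. }
(* the weights 2 and a make the |z|^2 terms cancel *)
assert (Hzy := dot_le_weighted m z y 2 ltac:(lra)).
assert (Hue := dot_le_weighted m u e a Ha).
assert (HU := dot_self_nonneg m u). assert (HE := dot_self_nonneg m e).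
assert (HY := dot_self_nonneg m y).
assert (Hsq : a * a * dot m u u <= dot m e e + a * dot m y y).
{ assert (a * dot m u u <= / 2 * dot m y y + / a * dot m e e) by lra.
  apply (Rmult_le_compat_l a) in H; [|lra].
  replace (a * (/ 2 * dot m y y + / a * dot m e e)) with (a / 2 * dot m y y + dot m e e)
    in H by (field; lra).
  nra. }
rewrite !vnorm_dot. apply mul_sqrt_le; [lra|exact HU| |].
- apply Rplus_le_le_0_compat; [|apply Rmult_le_pos]; apply sqrt_pos.
- assert (sqrt (dot m e e) * sqrt (dot m e e) = dot m e e) by (apply sqrt_sqrt; lra).
  assert (sqrt (dot m y y) * sqrt (dot m y y) = dot m y y) by (apply sqrt_sqrt; lra).
  assert (sqrt a * sqrt a = a) by (apply sqrt_sqrt; lra).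
  assert (0 <= sqrt (dot m e e) * (sqrt (dot m y y) * sqrt a))
    by (apply Rmult_le_pos; [|apply Rmult_le_pos]; apply sqrt_pos).
  nra.
Qed.

Lemma Qainv_data_bound m A a f (y fd : vec) d : 0 < a ->
  (forall i, (i < m)%nat -> mv m A y i = f i) ->
  vnorm m (fun i => fd i - f i) <= d ->
  a * vnorm m (Qainv m A a fd) <= d + vnorm m y * sqrt a.
Proof.
intros Ha Hy Hd.
enough (a * vnorm m (Qainv m A a fd) <= vnorm m (fun i => fd i - f i) + vnorm m y * sqrt a)
  by lra.
apply (Qa_solution_bound m A); [exact Ha|]. intros i Hi.
rewrite (Qainv_spec m A a fd Ha i Hi), (Hy i Hi). ring.
Qed.

Lemma sqrt_geometric_S a0 q n : 0 <= a0 -> 0 <= q ->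
  sqrt (a0 * q ^ S n) = sqrt q * sqrt (a0 * q ^ n).
Proof.
intros Ha0 Hq. rewrite <- sqrt_mult by (apply Rmult_le_pos || idtac; auto using pow_le).
f_equal. simpl. ring.
Qed.

Lemma Gseq_le m A q a0 fd d B : 0 < q < 1 -> 0 < a0 -> 0 <= d -> 0 <= B ->
  (forall n, a0 * q ^ S n * vnorm m (Qainv m A (a0 * q ^ S n) fd)
             <= d + B * sqrt (a0 * q ^ S n)) ->
  forall n, Gseq m A q a0 fd n <= d + 2 * B * sqrt (a0 * q ^ n).
Proof.
intros Hq Ha0 Hd HB Hterm n. induction n as [|n IH]; cbn [Gseq].
{ assert (0 <= sqrt (a0 * q ^ 0)) by apply sqrt_pos. nra. }
specialize (Hterm n). rewrite sqrt_geometric_S in Hterm |- * by lra.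
set (T := a0 * q ^ S n * vnorm m (Qainv m A (a0 * q ^ S n) fd)) in Hterm.
replace ((1 - q) * a0 * q ^ S n * vnorm m (Qainv m A (a0 * q ^ S n) fd)) with ((1 - q) * T)
  by (unfold T; ring).
set (s := sqrt (a0 * q ^ n)) in *. set (r := sqrt q) in *.
assert (Hs : 0 <= s) by apply sqrt_pos.
assert (Hr : 0 <= r) by apply sqrt_pos.
assert (Hrr : r * r = q) by (apply sqrt_sqrt; lra).
assert (Hr1 : r < 1) by (unfold r; rewrite <- sqrt_1; apply sqrt_lt_1_alt; lra).
assert (q * Gseq m A q a0 fd n <= q * (d + 2 * B * s)) by (apply Rmult_le_compat_l; lra).
assert ((1 - q) * T <= (1 - q) * (d + B * (r * s))) by (apply Rmult_le_compat_l; lra).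
(* with q = r^2 the remaining gap is B s r (1 - r)^2 >= 0 *)
assert (q * (2 * B * s) + (1 - q) * (B * (r * s)) <= 2 * B * (r * s)).
{ assert (0 <= B * s * r * (1 - r) ^ 2)
    by (repeat apply Rmult_le_pos; try apply pow2_ge_0; lra).
  rewrite <- Hrr. nra. }
lra.
Qed.

Lemma Gseq_1 m A q a0 fd :
  Gseq m A q a0 fd 1 = (1 - q) * a0 * q * vnorm m (Qainv m A (a0 * q) fd).
Proof. simpl. rewrite Rmult_1_r. ring. Qed.

Lemma Rpower_split d eps : 0 < d -> d = Rpower d (1 - eps) * Rpower d eps.
Proof.
intros Hd. rewrite <- Rpower_plus. replace (1 - eps + eps) with 1 by ring.
now rewrite Rpower_1.
Qed.

Lemma Rpower_ge_self d eps : 0 < d < 1 -> eps <= 1 -> d <= Rpower d eps.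
Proof.
intros Hd Heps. unfold Rpower. rewrite <- (exp_ln d) at 1 by lra.
assert (ln d < 0) by (rewrite <- ln_1; apply ln_increasing; lra).
destruct (Rle_lt_or_eq_dec eps 1 Heps) as [Hlt | ->].
- apply Rlt_le, exp_increasing. nra.
- rewrite Rmult_1_l. lra.
Qed.

Lemma step_ratio_bound a0 q C eps B d N :
  0 < q -> 0 < a0 -> 1 < C -> eps <= 1 -> 0 < d < 1 ->
  C * Rpower d eps < d + B * sqrt (a0 * q ^ N) ->
  d / sqrt (a0 * q ^ S N) <= B / (sqrt q * (C - 1)) * Rpower d (1 - eps).
Proof.
intros Hq Ha0 HC Heps Hd Hbefore.
rewrite sqrt_geometric_S by lra.
set (s := sqrt (a0 * q ^ N)) in *. set (r := sqrt q).
assert (Hs : 0 < s) by (apply sqrt_lt_R0, Rmult_lt_0_compat; [lra|apply pow_lt; lra]).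
assert (Hr : 0 < r) by (apply sqrt_lt_R0; lra).
rewrite (Rpower_split d eps) at 1 by lra.
set (E := Rpower d eps) in *. set (P := Rpower d (1 - eps)).
assert (HP : 0 < P) by apply exp_pos.
assert (HdE : d <= E) by (apply Rpower_ge_self; lra).
assert (HE : E * (C - 1) <= B * s) by lra.
replace (P * E / (r * s)) with (P / r * (E / s)) by (field; lra).
replace (B / (r * (C - 1)) * P) with (P / r * (B / (C - 1))) by (field; lra).
apply Rmult_le_compat_l; [apply Rlt_le, Rdiv_lt_0_compat; lra|].
apply (Rmult_le_reg_r (s * (C - 1))); [apply Rmult_lt_0_compat; lra|].
replace (E / s * (s * (C - 1))) with (E * (C - 1)) by (field; lra).
replace (B / (C - 1) * (s * (C - 1))) with (B * s) by (field; lra).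
exact HE.
Qed.

Lemma limit1_in_of_power_bound (g : R -> R) p K : 0 < p -> 0 <= K ->
  (forall d, 0 < d < 1 -> 0 <= g d <= K * Rpower d p) ->
  limit1_in g (fun d => 0 < d < 1) 0 0.
Proof.
intros Hp HK Hg e He.
exists (Rpower (e / (K + 1)) (/ p)). split; [apply exp_pos|].
intros d [Hd Hdist]. simpl in *. unfold R_dist in *.
rewrite Rminus_0_r, Rabs_pos_eq in Hdist by lra.
rewrite Rminus_0_r, Rabs_pos_eq by (apply Hg; exact Hd).
assert (Hdp : Rpower d p < e / (K + 1)).
{ replace (e / (K + 1)) with (Rpower (Rpower (e / (K + 1)) (/ p)) p).
  - apply Rlt_Rpower_l; lra.
  - rewrite Rpower_mult, Rinv_l, Rpower_1 by (apply Rdiv_lt_0_compat || idtac; lra).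
    reflexivity. }
assert (0 < Rpower d p) by apply exp_pos.
destruct (Hg d Hd) as [_ Hle].
apply (Rle_lt_trans _ ((K + 1) * Rpower d p)); [nra|].
replace e with ((K + 1) * (e / (K + 1))) by (field; lra).
apply Rmult_lt_compat_l; lra.
Qed.

Theorem lemma2p9 (m : nat) (A : mat) (f y : vec)
  (Hrange : exists x : vec, forall i, (i < m)%nat -> mv m A x i = f i)
  (Hy : forall i, (i < m)%nat -> mv m A y i = f i)
  (Hymin : forall z : vec, (forall i, (i < m)%nat -> mv m A z i = f i) ->
           vnorm m y <= vnorm m z)
  (q a0 C eps : R)
  (Hq : 0 < q < 1) (Ha0 : 0 < a0) (HC : 1 < C) (Heps : 0 < eps < 1)
  (fd : R -> vec) (nd : R -> nat)
  (Hfd : forall d, 0 < d < 1 ->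
     vnorm m (fun i => fd d i - f i) <= d)
  (Hstart : forall d, 0 < d < 1 ->
     (1 - q) * a0 * q * vnorm m (Qainv m A (a0 * q) (fd d)) > C * Rpower d eps)
  (Hnd : forall d, 0 < d < 1 ->
     (1 <= nd d)%nat /\
     Gseq m A q a0 (fd d) (nd d) <= C * Rpower d eps /\
     (forall n, (1 <= n)%nat -> (n < nd d)%nat ->
        Gseq m A q a0 (fd d) n > C * Rpower d eps)) :
  limit1_in (fun d => d / sqrt (a0 * q ^ (nd d))) (fun d => 0 < d < 1) 0 0.
Proof.
set (Y := vnorm m y). assert (HY : 0 <= Y) by apply sqrt_pos.
apply (limit1_in_of_power_bound _ (1 - eps) (2 * Y / (sqrt q * (C - 1)))); [lra| |].
{ apply Rmult_le_pos; [lra|]. apply Rlt_le, Rinv_0_lt_compat, Rmult_lt_0_compat; [|lra].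
  apply sqrt_lt_R0; lra. }
intros d Hd. destruct (Hnd d Hd) as [Hge1 [Hstop Hbefore]].
assert (HG : forall n, Gseq m A q a0 (fd d) n <= d + 2 * Y * sqrt (a0 * q ^ n)).
{ apply Gseq_le; [lra|lra|lra|exact HY|]. intros n.
  apply (Qainv_data_bound m A _ f); [|exact Hy|exact (Hfd d Hd)].
  apply Rmult_lt_0_compat; [lra|apply pow_lt; lra]. }
destruct (nd d) as [|[|N]] eqn:Hn; [lia| |].
{ rewrite Gseq_1 in Hstop. specialize (Hstart d Hd). lra. }
split.
- apply Rlt_le, Rdiv_lt_0_compat; [lra|].
  apply sqrt_lt_R0, Rmult_lt_0_compat; [lra|apply pow_lt; lra].
- apply step_ratio_bound; try lra.
  specialize (Hbefore (S N) ltac:(lia) ltac:(lia)). specialize (HG (S N)). lra.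
Qed.
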